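(* Fix integers $c\ge2$, $k\ge2$. Let $P$ be the RAM program that, on a dataset $x$ with $n=|x|$, performs independent biased coin flips where flip number $i+1$ ($i=0,1,2,\dots$) succeeds with probability $\frac{1}{(\max\{n-i,0\}+k)^c}$, stops at the first success, and outputs the number $\hat y$ of unsuccessful flips preceding it. Then $$\Pr\Big[\hat y<\frac n2\Big]\le O\!\left(\frac{1}{n^{c-1}}\right).$$
   Context: $n=|x|$ is the number of records in the input dataset, which the RAM program can read directly. *)

From HB Require Import structures.
From mathcomp Require Import all_boot all_order all_algebra.
Set Implicit Arguments. Unset Strict Implicit. Unset Printing Implicit Defensive.
Import Order.TTheory GRing.Theory Num.Theory.
Local Open Scope ring_scope.

(* Success probability of flip number i+1 (i = 0,1,2,...) on a dataset of
   size n: 1 / (max(n - i, 0) + k)^c.  Truncated nat subtraction (n - i)%N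
   is exactly max(n - i, 0). *)
Definition flip_prob (R : realFieldType) (c k n i : nat) : R :=
  1 / (((n - i)%N + k)%:R ^+ c).

(* Output distribution of P: Pr[yhat = j] = (prod_{i<j} (1 - p_i)) * p_j,
   the probability that the first j flips fail and flip j+1 succeeds. *)
Definition yhat_pmf (R : realFieldType) (c k n j : nat) : R :=
  (\prod_(i < j) (1 - flip_prob R c k n i)) * flip_prob R c k n j.

Definition prob_yhat_lt_half (R : realFieldType) (c k n : nat) : R :=
  \sum_(j < n | (2 * j < n)%N) yhat_pmf R c k n j.

From HB Require Import structures.
From mathcomp Require Import all_boot all_order all_algebra.
From mathcomp Require Import zify.
Import Order.TTheory GRing.Theory Num.Theory.
Local Open Scope ring_scope.

(* While fewer than n/2 flips have been made, the success probability is at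
   most (2/n)^c, and the probability of stopping at a given flip is at most
   its success probability; summing over the fewer than n flips in question
   gives n (2/n)^c = 2^c / n^(c-1). *)

Section FlipProb.

Variables (R : realFieldType) (c k n : nat).

Lemma flip_prob_ge0 i : 0 <= flip_prob R c k n i.
Proof. by rewrite /flip_prob divr_ge0 // exprn_ge0. Qed.

(* Holds even when the base is 0, since then 1 / 0 = 0. *)
Lemma flip_prob_le1 i : flip_prob R c k n i <= 1.
Proof.
rewrite /flip_prob mul1r -natrX.
have [->|m_neq0] := eqVneq (((n - i) + k) ^ c)%N 0%N; first by rewrite invr0.
by rewrite invf_le1 ?ler1n ?ltr0n lt0n.
Qed.

Lemma yhat_pmf_le_flip_prob j : yhat_pmf R c k n j <= flip_prob R c k n j.
Proof.
rewrite /yhat_pmf ler_piMl ?flip_prob_ge0 //.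
apply: prodr_ile1 => i _.
by rewrite subr_ge0 flip_prob_le1 gerBl flip_prob_ge0.
Qed.

Lemma flip_prob_first_half j :
  (2 * j < n)%N -> flip_prob R c k n j <= (2 ^ c)%:R / n%:R ^+ c.
Proof.
move=> lt_2j_n; rewrite /flip_prob -!natrX.
have n_gt0 : (0 < n ^ c)%N by rewrite expn_gt0; apply/orP; left; lia.
have m_gt0 : (0 < ((n - j) + k) ^ c)%N by rewrite expn_gt0; apply/orP; left; lia.
rewrite ler_pdivrMr ?ltr0n // mulrAC ler_pdivlMr ?ltr0n // mul1r -natrM ler_nat.
have [->|c_gt0] := posnP c; first by rewrite !expn0.
by rewrite -expnMn leq_exp2r //; lia.
Qed.

Lemma prob_yhat_lt_half_le :
  prob_yhat_lt_half R c k n <= n%:R * ((2 ^ c)%:R / n%:R ^+ c).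
Proof.
rewrite -[n in n%:R * _]card_ord mulr_natl -sumr_const.
rewrite /prob_yhat_lt_half big_mkcond; apply: ler_sum => j _.
case: ifP => [lt_2j_n|_]; last by rewrite divr_ge0 ?exprn_ge0.
exact: le_trans (yhat_pmf_le_flip_prob j) (flip_prob_first_half j lt_2j_n).
Qed.

End FlipProb.

Lemma mulr_natl_div_expr (R : numFieldType) (a : R) (n c : nat) :
  (0 < n)%N -> (0 < c)%N -> n%:R * (a / n%:R ^+ c) = a / n%:R ^+ (c - 1).
Proof.
move=> n_gt0 c_gt0; have n_neq0 : n%:R != 0 :> R by rewrite pnatr_eq0 -lt0n.
by rewrite subn1 -{1}(prednK c_gt0) exprS invfM mulrCA mulVKf.
Qed.

Theorem mainTheorem9 (R : realFieldType) (c k : nat) :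
  (2 <= c)%N -> (2 <= k)%N ->
  exists C : R, exists N : nat, forall n : nat, (N <= n)%N ->
    prob_yhat_lt_half R c k n <= C / (n%:R ^+ (c - 1)).
Proof.
move=> c_ge2 _; exists (2 ^ c)%:R, 1%N => n n_gt0.
rewrite -mulr_natl_div_expr //; last by lia.
exact: prob_yhat_lt_half_le.
Qed.
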